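(* Let $n\geq 2$ and $k\in\{0,\ldots,n-1\}$ be integers, and define $$\varphi_{n,k}(x)=\sum_{i=0}^{n-1}\frac{1}{1-\frac{i}{n-1}x}-\sum_{i=0}^{n-k-1}\frac{1}{1-x-\frac{i}{n-1}x},\qquad x\in\left[0,\frac{n-1}{2n-k-2}\right).$$ Then there exists $x_{n,k}\in\left[\frac{k-1}{n-1},\frac{k}{n-1}\right]$ such that $\varphi_{n,k}$ is positive on $[0,x_{n,k})$ and negative on $\left(x_{n,k},\frac{n-1}{2n-k-2}\right)$. *)

From HB Require Import structures.
From mathcomp Require Import all_boot all_order all_algebra.
From mathcomp Require Import reals.
Set Implicit Arguments. Unset Strict Implicit. Unset Printing Implicit Defensive.
Import Order.TTheory GRing.Theory Num.Theory.
Local Open Scope ring_scope.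

Definition phi (R : realType) (n k : nat) (x : R) : R :=
  \sum_(0 <= i < n) (1 - (i%:R / (n.-1)%:R) * x)^-1
  - \sum_(0 <= i < n - k) (1 - x - (i%:R / (n.-1)%:R) * x)^-1.

Definition phi_bound (R : realType) (n k : nat) : R :=
  (n.-1)%:R / (2 * n - k - 2)%N%:R.

From HB Require Import structures.
From mathcomp Require Import all_boot all_order all_algebra.
From mathcomp Require Import reals.
From mathcomp Require Import classical_sets sequences exp.
From mathcomp Require Import lra zify ring.
Import Order.TTheory GRing.Theory Num.Theory.
Local Open Scope ring_scope.

(* Write n = m + 1.  On the domain the weight 1 - x is positive and (1 - x) phi(x)
   is strictly decreasing: it is a sum of terms (1 - x) / (1 - a x) with
   0 <= a <= 1, nonincreasing and strictly so for a = 0, minus terms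
   (1 - x) / (1 - x - b x) with b >= 0, which are nondecreasing.  Hence phi changes
   sign exactly once, at the supremum x0 of its nonnegative region.
   To locate x0, substitute x = m c: both sums in phi become sums of 1 / (s - i c),
   i.e. Riemann sums of 1 / t, which 1 + t <= e^t brackets between logarithms of
   ratios.  At c = k / m^2 the two logarithms coincide, so phi(k / m) <= 0; at
   c = (k - 1) / m^2 comparing the ratios gives phi((k - 1) / m) >= 0. *)


Section PhiSignChange.
Variable R : realType.

Lemma single_sign_change (B : R) (w f : R -> R) : 0 < B -> 0 <= f 0 ->
  (forall x, 0 <= x < B -> 0 < w x) ->
  (forall x y, 0 <= x < y -> y < B -> w y * f y < w x * f x) ->
  exists x0, [/\ 0 <= x0 <= B, forall x, 0 <= x < x0 -> 0 < f x
                              & forall x, x0 < x < B -> f x < 0].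
Proof.
move=> B0 f0 w_pos wf_decr.
pose S := [set t | 0 <= t < B /\ 0 <= f t]%classic.
have S0 : S 0 by split; rewrite ?lexx.
have ubS : ubound S B by move=> t [/andP[_ /ltW]].
have le_supS : ubound S (sup S) by apply: ub_le_sup; exists B.
exists (sup S); split.
- by rewrite le_supS //= ge_sup //; exists 0.
- move=> x /andP[x0 x_lt].
  have [y [/andP[y0 yB] fy] xy] := sup_gt (ex_intro _ 0 S0) x_lt.
  have wx : 0 < w x by rewrite w_pos // x0 (lt_trans xy yB).
  have wy : 0 < w y by rewrite w_pos // y0 yB.
  have : w y * f y < w x * f x by rewrite wf_decr // x0 xy.
  nra.
- move=> x /andP[supS_lt xB]; rewrite ltNge; apply/negP => fx.
  have : S x by split; rewrite ?xB ?(le_trans (le_supS _ S0) (ltW supS_lt)).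
  by move/le_supS; rewrite leNgt supS_lt.
Qed.

Lemma sub1_over_sub1M_nonincr (a x y : R) : 0 <= a <= 1 -> 0 <= x <= y ->
  a * y < 1 -> (1 - y) / (1 - a * y) <= (1 - x) / (1 - a * x).
Proof.
move=> /andP[a0 a1] /andP[x0 xy] ay1.
have ax1 : a * x < 1 by nra.
rewrite ler_pdivrMr ?subr_gt0 // mulrAC ler_pdivlMr ?subr_gt0 //.
have : 0 <= (y - x) * (1 - a) by rewrite mulr_ge0 ?subr_ge0.
nra.
Qed.

Lemma sub1_over_sub1DM_nondecr (b x y : R) : 0 <= b -> 0 <= x <= y ->
  b * y < 1 - y -> (1 - x) / (1 - x - b * x) <= (1 - y) / (1 - y - b * y).
Proof.
move=> b0 /andP[x0 xy] by1.
have bx1 : b * x < 1 - x by nra.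
rewrite ler_pdivrMr ?subr_gt0 // mulrAC ler_pdivlMr ?subr_gt0 //.
have : 0 <= b * (y - x) by rewrite mulr_ge0 ?subr_ge0.
nra.
Qed.

Lemma expR_div_le_ratio (w c : R) : 0 < w - c -> 0 < w ->
  expR (c / w) <= w / (w - c).
Proof.
move=> wc w0.
have e : (w - c) / w = 1 + - (c / w) by field; rewrite gt_eqF.
have := expR_ge1Dx (- (c / w)); rewrite -e expRN ler_pdivrMr // => h.
by rewrite ler_pdivlMr // mulrC -ler_pdivlMr ?expR_gt0 // mulrC.
Qed.

Lemma ratio_le_expR_div (w c : R) : 0 < w - c ->
  w / (w - c) <= expR (c / (w - c)).
Proof.
move=> wc; rewrite (_ : w / (w - c) = 1 + c / (w - c)) ?expR_ge1Dx //.
by field; rewrite gt_eqF.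
Qed.

Lemma expR_sum_inv_le (s c : R) (N : nat) : 0 <= c -> N%:R * c < s ->
  expR (c * \sum_(i < N) (s - i%:R * c)^-1) <= s / (s - N%:R * c).
Proof.
move=> c0; elim: N => [|N IH] lt_Nc_s.
  by rewrite big_ord0 mulr0 expR0 mul0r subr0 divff // gt_eqF; lra.
have N0 : 0 <= N%:R :> R by rewrite ler0n.
rewrite -natr1 in lt_Nc_s.
rewrite big_ord_recr /= mulrDr expRD mulrC.
have -> : s / (s - (N.+1)%:R * c)
        = (s - N%:R * c) / (s - N%:R * c - c) * (s / (s - N%:R * c)).
  by rewrite -natr1; field; rewrite !gt_eqF //; nra.
apply: ler_pM; rewrite ?expR_ge0 //; [apply: expR_div_le_ratio | apply: IH]; nra.
Qed.

Lemma expR_sum_inv_ge (s c : R) (N : nat) : 0 <= c -> N%:R * c < s + c ->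
  (s + c) / (s + c - N%:R * c) <= expR (c * \sum_(i < N) (s - i%:R * c)^-1).
Proof.
move=> c0; elim: N => [|N IH] lt_Nc_sc.
  by rewrite big_ord0 mulr0 expR0 mul0r subr0 divff // gt_eqF; lra.
have N0 : 0 <= N%:R :> R by rewrite ler0n.
rewrite -natr1 in lt_Nc_sc.
rewrite big_ord_recr /= mulrDr expRD.
have -> : (s + c) / (s + c - (N.+1)%:R * c)
        = (s + c) / (s + c - N%:R * c) * ((s - N%:R * c + c) / (s - N%:R * c)).
  by rewrite -natr1; field; rewrite !gt_eqF //; nra.
have step := @ratio_le_expR_div (s - N%:R * c + c) c.
rewrite addrK in step.
apply: ler_pM; [apply: divr_ge0 | apply: divr_ge0 | apply: IH | apply: step]; nra.
Qed.

Lemma phi0 (n k : nat) : (k <= n)%N -> phi n k (0 : R) = k%:R.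
Proof.
move=> kn; rewrite /phi.
under eq_bigr do rewrite mulr0 subr0 invr1.
under [X in _ - X]eq_bigr do rewrite !mulr0 !subr0 invr1.
by rewrite !sumr_const_nat !subn0 natrB // subKr.
Qed.

Lemma phi_boundE (m k : nat) : (k <= m)%N ->
  phi_bound R m.+1 k = m%:R / (2 * m%:R - k%:R).
Proof.
move=> km; rewrite /phi_bound (_ : (2 * m.+1 - k - 2 = 2 * m - k)%N); last by lia.
by rewrite natrB ?natrM //; lia.
Qed.

Lemma prev_node_lt_phi_bound (m k : nat) : (0 < m)%N -> (k <= m)%N ->
  (k%:R - 1) / m%:R < phi_bound R m.+1 k.
Proof.
move=> m0 km.
have [M0 K0 KM] : [/\ 0 < m%:R :> R, 0 <= k%:R :> R & k%:R <= m%:R :> R].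
  by rewrite ltr0n ler0n ler_nat.
rewrite phi_boundE // ltr_pdivrMr // mulrAC ltr_pdivlMr; nra.
Qed.

Lemma phi_succE (m k : nat) (c : R) : (0 < m)%N -> (k <= m)%N ->
  phi m.+1 k (m%:R * c) = \sum_(i < m) (1 - i%:R * c)^-1
     - \sum_(i < m - k) (1 - m.+1%:R * c - i%:R * c)^-1.
Proof.
move=> m0 km; have m_neq0 : m%:R != 0 :> R by rewrite pnatr_eq0 -lt0n.
rewrite /phi /= !big_mkord subSn // big_ord_recr big_ord_recl /=.
rewrite divff // mul1r !mul0r subr0.
have scale (j : nat) : j%:R / m%:R * (m%:R * c) = j%:R * c by field.
have shift (j : nat) : 1 - m%:R * c - j.+1%:R * c = 1 - m.+1%:R * c - j%:R * c.
  by rewrite -!natr1; ring.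
under eq_bigr do rewrite scale.
under [X in _ - (_ + X)]eq_bigr do rewrite scale /bump /= add1n shift.
by rewrite opprD addrA addrK.
Qed.

Lemma scaled_phi_decreasing (m k : nat) (x y : R) : (0 < m)%N -> (k <= m)%N ->
  0 <= x < y -> y < phi_bound R m.+1 k ->
  (1 - y) * phi m.+1 k y < (1 - x) * phi m.+1 k x.
Proof.
move=> m0 km /andP[x0 xy].
have [M0 K0 KM] : [/\ 0 < m%:R :> R, 0 <= k%:R :> R & k%:R <= m%:R :> R].
  by rewrite ltr0n ler0n ler_nat.
rewrite phi_boundE // ltr_pdivlMr; last by lra.
move=> yB; have y1 : y < 1 by nra.
rewrite /phi /= !mulrBr !mulr_sumr !big_mkord.
apply: ltr_leB.
  rewrite big_ord_recl [ltRHS]big_ord_recl /= !mul0r !subr0 invr1 !mulr1.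
  apply: ltr_leD; first by lra.
  apply: ler_sum => i _.
  have iM : (lift ord0 i)%:R <= m%:R :> R by rewrite ler_nat -ltnS ltn_ord.
  apply: sub1_over_sub1M_nonincr.
  - by rewrite divr_ge0 ?ler0n // ler_pdivrMr ?mul1r.
  - by rewrite x0 ltW.
  - by rewrite mulrAC ltr_pdivrMr // mul1r; nra.
apply: ler_sum => i _.
have iMK : i%:R <= m%:R - k%:R :> R.
  by rewrite -natrB // ler_nat -ltnS -subSn // ltn_ord.
apply: sub1_over_sub1DM_nondecr.
- by rewrite divr_ge0 ?ler0n.
- by rewrite x0 ltW.
- by rewrite mulrAC ltr_pdivrMr //; nra.
Qed.

Lemma phi_node_le0 (m k : nat) : (k < m)%N -> phi m.+1 k (k%:R / m%:R : R) <= 0.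
Proof.
move=> km; have m0 : (0 < m)%N := leq_ltn_trans (leq0n k) km.
have [-> | k0] := posnP k; first by rewrite mul0r phi0.
have [M0 K0 KM] : [/\ 0 < m%:R :> R, 0 < k%:R :> R & k%:R < m%:R :> R].
  by rewrite !ltr0n ltr_nat.
pose c : R := k%:R / m%:R / m%:R.
have c0 : 0 < c by rewrite !divr_gt0.
pose r := 1 - m%:R * c.
have r0 : 0 < r.
  by rewrite /r mulrC divfK ?gt_eqF // subr_gt0 ltr_pdivrMr // mul1r.
have rc : 1 - m.+1%:R * c + c = r by rewrite /r -natr1; ring.
(* The choice c = k / m^2 makes both logarithmic bounds equal to ln (1 / r). *)
have r2 : r - (m - k)%:R * c = r * r.
  by rewrite natrB ?(ltnW km) // /r /c; field; rewrite gt_eqF.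
have upper := @expR_sum_inv_le 1 c m (ltW c0).
have lower := @expR_sum_inv_ge (1 - m.+1%:R * c) c (m - k) (ltW c0).
rewrite rc r2 in lower.
rewrite (_ : k%:R / m%:R = m%:R * c); last by rewrite /c; field; rewrite gt_eqF.
rewrite phi_succE ?(ltnW km) // subr_le0 -(ler_pM2l c0) -ler_expR.
apply: le_trans (upper _) (le_trans _ (lower _)).
- by rewrite -subr_gt0.
- by rewrite -/r (_ : 1 / r = r / (r * r)) //; field; rewrite gt_eqF.
- by rewrite -subr_gt0 r2 mulr_gt0.
Qed.

Lemma phi_prev_node_ge0 (m k : nat) : (1 < k <= m)%N ->
  0 <= phi m.+1 k ((k%:R - 1) / m%:R : R).
Proof.
move=> /andP[k1 km]; have m0 : (0 < m)%N := leq_trans (ltnW k1) km.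
have [M0 K1 KM] : [/\ 0 < m%:R :> R, 1 < k%:R :> R & k%:R <= m%:R :> R].
  by rewrite ltr0n ltr1n ler_nat.
pose c : R := (k%:R - 1) / m%:R / m%:R.
have c0 : 0 < c by rewrite !divr_gt0 // subr_gt0.
have pos_scaled (X Y : R) : X * (m%:R * m%:R) = Y -> 0 < Y -> 0 < X.
  by move=> <-; rewrite pmulr_lgt0 ?mulr_gt0.
pose s := 1 - m.+1%:R * c.
have MK : (m - k)%:R = m%:R - k%:R :> R by rewrite natrB.
have den_lower_gt0 : 0 < 1 + c - m%:R * c.
  apply: (pos_scaled _ (m%:R * m%:R - (m%:R - 1) * (k%:R - 1))); last by nra.
  by rewrite /c; field; rewrite gt_eqF.
have den_upper_gt0 : 0 < s - (m - k)%:R * c.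
  apply: (pos_scaled _ ((m%:R - k%:R + 1) ^+ 2)); last by rewrite exprn_gt0 //; lra.
  by rewrite MK /s /c -natr1; field; rewrite gt_eqF.
have gap_gt0 : 0 < 1 - (2 * m%:R - k%:R) * c.
  apply: (pos_scaled _ ((m%:R - k%:R + 1) ^+ 2 + (k%:R - 1))).
    by rewrite /c; field; rewrite gt_eqF.
  by rewrite ltr_pwDr ?sqr_ge0 // subr_gt0.
have lower := @expR_sum_inv_ge 1 c m (ltW c0).
have upper := @expR_sum_inv_le s c (m - k) (ltW c0).
have middle : s / (s - (m - k)%:R * c) <= (1 + c) / (1 + c - m%:R * c).
  rewrite ler_pdivrMr // mulrAC ler_pdivlMr // -subr_ge0.
  have -> : (1 + c) * (s - (m - k)%:R * c) - s * (1 + c - m%:R * c)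
          = c * (1 - (2 * m%:R - k%:R) * c).
    by rewrite MK /s /c -natr1; field; rewrite gt_eqF.
  by rewrite mulr_ge0 ?ltW.
rewrite (_ : (k%:R - 1) / m%:R = m%:R * c); last by rewrite /c; field; rewrite gt_eqF.
rewrite phi_succE // subr_ge0 -(ler_pM2l c0) -ler_expR.
by apply: le_trans (upper _) (le_trans middle (lower _)); lra.
Qed.

End PhiSignChange.

Theorem lemma2p3 (R : realType) (n k : nat) :
  (2 <= n)%N -> (k < n)%N ->
  exists x0 : R,
    (k%:R - 1) / (n.-1)%:R <= x0 <= k%:R / (n.-1)%:R /\
    (forall x : R, 0 <= x < x0 -> 0 < phi n k x) /\
    (forall x : R, x0 < x < phi_bound R n k -> phi n k x < 0).
Proof.
case: n => [//|m]; rewrite !ltnS => m0 km /=.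
have [M0 KM] : [/\ 0 < m%:R :> R & k%:R <= m%:R :> R] by rewrite ltr0n ler_nat.
have B0 : 0 < phi_bound R m.+1 k by rewrite phi_boundE // divr_gt0 //; lra.
have B1 : phi_bound R m.+1 k <= 1 by rewrite phi_boundE // ler_pdivrMr; lra.
have w_pos x : 0 <= x < phi_bound R m.+1 k -> 0 < 1 - x.
  by case/andP=> _ xB; lra.
have phi0_ge0 : 0 <= phi m.+1 k (0 : R) by rewrite phi0 ?ler0n // leqW.
have [x0 [/andP[x0_ge0 x0_leB] pos neg]] :=
  @single_sign_change R _ (fun x => 1 - x) (phi m.+1 k) B0 phi0_ge0 w_pos
    (fun x y => @scaled_phi_decreasing R m k x y m0 km).
exists x0; split=> //; apply/andP; split.
- case: (leqP k 1) => [k_le1 | k_gt1].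
    by apply: le_trans x0_ge0; rewrite pmulr_lle0 ?invr_gt0 // subr_le0 lern1.
  rewrite leNgt; apply/negP => lt_x0.
  have /(phi_prev_node_ge0 R) : (1 < k <= m)%N by rewrite k_gt1.
  by rewrite leNgt neg // lt_x0 prev_node_lt_phi_bound.
- move: km; rewrite leq_eqVlt => /orP[/eqP -> | lt_km].
    by rewrite divff ?gt_eqF // (le_trans x0_leB).
  rewrite leNgt; apply/negP => lt_x0.
  by have := @phi_node_le0 R _ _ lt_km; rewrite leNgt pos // lt_x0 divr_ge0 ?ler0n.
Qed.
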